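(* In the standing setting below, let $x'\in\mathbb{X}$, $y_0,y_1\in\mathbb{Y}$ with $y_0\ne y_1$, and $f_i(x)=-c(x,y_i)+c(x',y_i)$ for $i=0,1$. Let $S=\{x\in\mathbb{X}: f_0(x)\le f_1(x)\}$. If $f_0(x_0)=f_1(x_0)$ for some $x_0\in\mathbb{X}$, then $x_0\in\partial S$ (boundary in $\mathbb{R}^n$).
   Context: Standing setting: $\mathbb{X},\mathbb{Y}\subset\mathbb{R}^n$ are compact with non-empty interior; $c:\mathbb{X}\times\mathbb{Y}\to\mathbb{R}$ has continuous $D_xc$, $D_yc$, and continuous mixed second derivatives with $D^2_{xy}c=(D^2_{yx}c)^T$; for each $x$ the map $y\mapsto -D_xc(x,y)$ is injective on $\mathbb{Y}$ and for each $y$ the map $x\mapsto -D_yc(x,y)$ is injective on $\mathbb{X}$; $D^2_{xy}c(x,y)$ is invertible everywhere; for every $y$ the set $\{-D_yc(x,y):x\in\mathbb{X}\}$ is convex and for every $x$ the set $\{-D_xc(x,y):y\in\mathbb{Y}\}$ is convex. *)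

From HB Require Import structures.
From mathcomp Require Import all_boot all_order all_algebra.
From mathcomp Require Import all_classical all_reals all_analysis.
Set Implicit Arguments. Unset Strict Implicit. Unset Printing Implicit Defensive.
Import Order.TTheory GRing.Theory Num.Theory.
Import numFieldNormedType.Exports.
Local Open Scope classical_set_scope.
Local Open Scope ring_scope.

Definition dotv {R : realType} {n : nat} (u v : 'rV[R]_n) : R :=
  \sum_(i < n) u ord0 i * v ord0 i.

Definition has_grad {R : realType} {n : nat} (f : 'rV[R]_n -> R^o)
  (x g : 'rV[R]_n) : Prop :=
  differentiable f x /\ forall v, 'd f x v = dotv g v.

(* F : R^n -> R^n is differentiable at x with Jacobian matrix J,
   J i j = d F_i / d x_j, i.e. dF(x) v = J v (in row form: v *m J^T). *)
Definition has_jac {R : realType} {n : nat} (F : 'rV[R]_n -> 'rV[R]_n)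
  (x : 'rV[R]_n) (J : 'M[R]_n) : Prop :=
  differentiable F x /\ forall v, 'd F x v = v *m J^T.

Definition convexv {R : realType} {n : nat} (A : set 'rV[R]_n) : Prop :=
  forall a b t, A a -> A b -> 0 <= t -> t <= 1 -> A ((1 - t) *: a + t *: b).

Definition boundary {R : realType} {n : nat} (A : set 'rV[R]_n) : set 'rV[R]_n :=
  closure A `\` interior A.

(* Dxc x y is the gradient of c(., y) at x, Dyc x y the
   gradient of c(x, .) at y, Dxyc x y the matrix (d^2 c / dx_i dy_j)_{ij},
   Dyxc x y the matrix (d^2 c / dy_j dx_i)_{ji}.  Derivatives are required at
   interior points and the derivative functions are required to be continuous
   on X x Y (continuous extension up to the boundary). *)
Definition standing_setting {R : realType} {n : nat}
  (X Y : set 'rV[R]_n) (c : 'rV[R]_n -> 'rV[R]_n -> R) : Prop :=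
  compact X /\ compact Y /\ (interior X !=set0) /\ (interior Y !=set0) /\
  exists (Dxc Dyc : 'rV[R]_n -> 'rV[R]_n -> 'rV[R]_n)
         (Dxyc Dyxc : 'rV[R]_n -> 'rV[R]_n -> 'M[R]_n),
  ({within X `*` Y, continuous (fun p => c p.1 p.2)} /\
      (forall x y, interior X x -> Y y -> has_grad (fun z => c z y) x (Dxc x y)) /\
      (forall x y, X x -> interior Y y -> has_grad (fun z => c x z) y (Dyc x y)) /\
      {within X `*` Y, continuous (fun p => Dxc p.1 p.2)} /\
      {within X `*` Y, continuous (fun p => Dyc p.1 p.2)} /\
      (forall x y, interior X x -> interior Y y ->
         has_jac (fun z => Dxc x z) y (Dxyc x y) /\
         has_jac (fun z => Dyc z y) x (Dyxc x y)) /\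
      {within X `*` Y, continuous (fun p => Dxyc p.1 p.2)} /\
      {within X `*` Y, continuous (fun p => Dyxc p.1 p.2)} /\
      (forall x y, X x -> Y y -> Dxyc x y = (Dyxc x y)^T) /\
      (forall x, X x -> {in Y &, injective (fun y => - Dxc x y)}) /\
      (forall y, Y y -> {in X &, injective (fun x => - Dyc x y)}) /\
      (forall x y, X x -> Y y -> Dxyc x y \in unitmx) /\
      (forall y, Y y -> convexv [set - Dyc x y | x in X]) /\
      (forall x, X x -> convexv [set - Dxc x y | y in Y])).

From HB Require Import structures.
From mathcomp Require Import all_boot all_order all_algebra.
From mathcomp Require Import all_classical all_reals all_analysis.
From mathcomp Require Import lra.
Set Implicit Arguments. Unset Strict Implicit. Unset Printing Implicit Defensive.
Import Order.TTheory GRing.Theory Num.Theory.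
Import numFieldNormedType.Exports.
Local Open Scope classical_set_scope.
Local Open Scope ring_scope.

(* If x0 were interior to S, then near x0 the function
   g := c(., y1) - c(., y0) = f0 - f1 + const would be maximal at x0, so its
   gradient D_x c(x0, y1) - D_x c(x0, y0) would vanish (Fermat's rule); this
   contradicts the injectivity of y |-> -D_x c(x0, y) since y0 <> y1. *)

Lemma derive_le0_at_local_max (R : realType) (V : normedModType R)
    (f : V -> R^o) (x v : V) :
  derivable f x v -> (\forall z \near x, f z <= f x) -> 'D_v f x <= 0.
Proof.
move=> fv fmax; set q := fun h : R => h^-1 *: ((f \o shift x) (h *: v) - f x).
have q_right : q @ 0^'+ --> 'D_v f x.
  apply: cvg_trans fv; apply: cvg_app => A [e e0 Ae].
  by exists e => // h he /lt0r_neq0; apply: Ae.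
have line_to_x : (fun h : R => h *: v + x) @ 0 --> x.
  suff : (fun h : R => h *: v + x) @ 0 --> 0 *: v + x by rewrite scale0r add0r.
  by apply: cvgD; [apply: cvgZ; [exact: cvg_id | exact: cvg_cst] | exact: cvg_cst].
rewrite -(cvg_lim _ q_right) //; apply: limr_le; first exact: cvgP q_right.
near=> h; apply: mulr_ge0_le0.
  by rewrite invr_ge0 ltW //; near: h; exact: nbhs_right_gt.
by rewrite subr_le0; near: h; apply: cvg_within; exact: line_to_x fmax.
Unshelve. all: by end_near. Qed.

Section Gradient.
Variables (R : realType) (n : nat).
Implicit Types (u v a b : 'rV[R]_n) (f h : 'rV[R]_n -> R^o).

Lemma dotvBl a b v : dotv (a - b) v = dotv a v - dotv b v.
Proof. by rewrite /dotv -sumrB; apply: eq_bigr => i _; rewrite !mxE mulrBl. Qed.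

Lemma dotvv_gt0 u : u != 0 -> 0 < dotv u u.
Proof.
apply: contraNT; rewrite -leNgt => uu_le0; apply/eqP/rowP => j.
have /psumr_eq0P uu0 : dotv u u = 0.
  by apply/eqP; rewrite eq_le uu_le0 sumr_ge0 // => i _; rewrite -expr2 sqr_ge0.
by apply/eqP; rewrite mxE -sqrf_eq0 expr2; apply/eqP/uu0 => // i _; rewrite -expr2 sqr_ge0.
Qed.

Lemma has_grad_derivable f x a v : has_grad f x a -> derivable f x v.
Proof. by move=> [fx _]; exact: diff_derivable. Qed.

Lemma has_grad_derive f x a v : has_grad f x a -> 'D_v f x = dotv a v.
Proof. by move=> [fx dfx]; rewrite deriveE. Qed.

Lemma has_gradB f h x a b :
  has_grad f x a -> has_grad h x b -> has_grad (f - h) x (a - b).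
Proof.
move=> [fx dfx] [hx dhx]; split; first exact: differentiableB.
by move=> v; rewrite diffB // dotvBl /= dfx dhx.
Qed.

Lemma has_grad_local_max f x a :
  has_grad f x a -> (\forall z \near x, f z <= f x) -> a = 0.
Proof.
move=> fa fmax; have := derive_le0_at_local_max (has_grad_derivable (v := a) fa) fmax.
rewrite (has_grad_derive a fa) leNgt; apply: contraNeq; exact: dotvv_gt0.
Qed.

End Gradient.

Theorem lemma2p19 (R : realType) (n : nat) (X Y : set 'rV[R]_n)
  (c : 'rV[R]_n -> 'rV[R]_n -> R) (x' y0 y1 x0 : 'rV[R]_n) :
  standing_setting X Y c ->
  X x' -> Y y0 -> Y y1 -> y0 <> y1 ->
  let f0 := fun x => - c x y0 + c x' y0 in
  let f1 := fun x => - c x y1 + c x' y1 in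
  let S := [set x | X x /\ f0 x <= f1 x] in
  X x0 -> f0 x0 = f1 x0 ->
  boundary S x0.
Proof.
move=> [_ [_ [_ [_ [Dxc [_ [_ [_ [_ [grad_x [_ [_ [_ [_ [_ [_ [_ [inj_x _]]]]]]]]]]]]]]]]]].
move=> _ Yy0 Yy1 y0_neq_y1 f0 f1 S Xx0 f01_x0.
split; first by apply: subset_closure; split => //; rewrite f01_x0.
move=> S_nbhs; have Xint_x0 : interior X x0 by apply: filterS S_nbhs => x [].
pose g := (fun z => c z y1 : R^o) - (fun z => c z y0).
have g_grad : has_grad g x0 (Dxc x0 y1 - Dxc x0 y0).
  by apply: has_gradB; apply: grad_x.
have g_max : \forall z \near x0, g z <= g x0.
  apply: filterS S_nbhs => z [_].
  by rewrite /g !fctE /f0 /f1 in f01_x0 *; lra.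
apply: y0_neq_y1; apply: (inj_x x0 Xx0); rewrite ?inE //=.
by apply/eqP; rewrite eqr_opp eq_sym -subr_eq0 (has_grad_local_max g_grad g_max).
Qed.
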